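(* Let $M$ be a Sidon set in $\mathbb{F}_2^t$ with $|M|\geq 3$. Then the following are equivalent: (a) $M$ is maximal; (b) $S_3(M) = \mathbb{F}_2^t$; (c) $S_3^*(M)\cup M = \mathbb{F}_2^t$ and $S_3^*(M)\cap M = \emptyset$. Here $S_3(M)=\{m_1+m_2+m_3 : m_1,m_2,m_3\in M\}$ and $S_3^*(M)=\{m_1+m_2+m_3 : m_1,m_2,m_3\in M \text{ pairwise distinct}\}$.
   Context: $\mathbb{F}_2^t$ is the $t$-dimensional vector space over $\mathbb{F}_2$. A subset $M\subseteq \mathbb{F}_2^t$ is Sidon if $m_1+m_2\neq m_3+m_4$ for all pairwise distinct $m_1,m_2,m_3,m_4\in M$. A Sidon set $M$ is maximal if $M=S$ for every Sidon set $S$ with $M\subseteq S\subseteq\mathbb{F}_2^t$. *)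

From mathcomp Require Import all_boot all_algebra.
Set Implicit Arguments. Unset Strict Implicit. Unset Printing Implicit Defensive.
Import GRing.Theory.
Local Open Scope ring_scope.

Notation F2t t := 'rV['F_2]_t.

Definition sidon (t : nat) (M : {set F2t t}) : Prop :=
  forall m1 m2 m3 m4, m1 \in M -> m2 \in M -> m3 \in M -> m4 \in M ->
    m1 != m2 -> m1 != m3 -> m1 != m4 -> m2 != m3 -> m2 != m4 -> m3 != m4 ->
    m1 + m2 != m3 + m4.

Definition maximal_sidon (t : nat) (M : {set F2t t}) : Prop :=
  sidon M /\ forall S : {set F2t t}, sidon S -> M \subset S -> S = M.

Definition S3 (t : nat) (M : {set F2t t}) : {set F2t t} :=
  [set x | [exists m1 in M, exists m2 in M, exists m3 in M, x == m1 + m2 + m3]].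

Definition S3star (t : nat) (M : {set F2t t}) : {set F2t t} :=
  [set x | [exists m1 in M, exists m2 in M, exists m3 in M,
     [&& m1 != m2, m1 != m3, m2 != m3 & x == m1 + m2 + m3]]].

From mathcomp Require Import all_boot all_algebra.
Set Implicit Arguments. Unset Strict Implicit. Unset Printing Implicit Defensive.
Local Open Scope ring_scope.
Import GRing.Theory.

(* Over F_2 a sum with a repeated summand collapses, so S_3(M) = S_3^*(M) ∪ M,
   and a + b = c + d is the same as a = b + c + d.  Hence M is Sidon iff no
   element of M lies in S_3^*(M), and M ∪ {x} (x ∉ M) is Sidon iff moreover
   x ∉ S_3^*(M).  So M is maximal iff every x ∉ M lies in S_3^*(M), i.e. iff
   S_3(M) is everything; and since the union S_3^*(M) ∪ M is always disjoint
   for Sidon M, this is (c). *)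

Section CharTwo.

Variable V : lmodType 'F_2.
Implicit Types x y z : V.

Lemma addrr_F2 x : x + x = 0.
Proof.
have two0 : 2%:R = 0 :> 'F_2 by apply/val_inj.
by rewrite -mulr2n -scaler_nat two0 scale0r.
Qed.

Lemma oppr_F2 x : - x = x.
Proof. exact/addr0_eq/addrr_F2. Qed.

Lemma addr_eq_F2 x y z : (x + y == z) = (x == y + z).
Proof. by rewrite [y + z]addrC -subr_eq oppr_F2. Qed.

Lemma addr_eq0_F2 x y : (x + y == 0) = (x == y).
Proof. by rewrite addr_eq_F2 addr0. Qed.

Lemma addr_eql_F2 x y z : (x + y + z == x) = (y == z).
Proof. by rewrite -addrA addrC addr_eq_F2 addrr_F2 addr_eq0_F2. Qed.

End CharTwo.

Section SumsOfThree.

Variable t : nat.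
Implicit Types (M S : {set F2t t}) (x : F2t t).

Lemma S3starP M x :
  reflect (exists a b c, [/\ a \in M, b \in M, c \in M,
                             [&& a != b, a != c & b != c] & x = a + b + c])
          (x \in S3star M).
Proof.
rewrite inE; apply: (iffP idP).
  case/exists_inP=> a aM /exists_inP[b bM /exists_inP[c cM /and4P[ab ac bc /eqP->]]].
  by exists a, b, c; rewrite ab ac bc.
case=> a [b [c [aM bM cM /and3P[ab ac bc] ->]]].
apply/exists_inP; exists a => //; apply/exists_inP; exists b => //.
by apply/exists_inP; exists c; rewrite ?ab ?ac ?bc ?eqxx.
Qed.

Lemma mem_S3star M a b c : a \in M -> b \in M -> c \in M ->
  a != b -> a != c -> b != c -> a + b + c \in S3star M.
Proof. by move=> aM bM cM ab ac bc; apply/S3starP; exists a, b, c; rewrite ab ac bc. Qed.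

Lemma S3star_subset M S : M \subset S -> S3star M \subset S3star S.
Proof.
move=> /subsetP sMS; apply/subsetP=> _ /S3starP[a [b [c [aM bM cM abc ->]]]].
by case/and3P: abc => ab ac bc; apply: mem_S3star; rewrite ?sMS.
Qed.

Lemma S3E M : S3 M = S3star M :|: M.
Proof.
apply/setP=> x; rewrite inE in_setU; apply/idP/idP.
  case/exists_inP=> a aM /exists_inP[b bM /exists_inP[c cM /eqP->]].
  have [<-|ab] := eqVneq a b; first by rewrite addrr_F2 add0r cM orbT.
  have [<-|ac] := eqVneq a c; first by rewrite addrAC addrr_F2 add0r bM orbT.
  have [<-|bc] := eqVneq b c; first by rewrite -addrA addrr_F2 addr0 aM orbT.
  by rewrite mem_S3star.
case/orP=> [/S3starP[a [b [c [aM bM cM _ ->]]]] | xM].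
  by apply/exists_inP; exists a => //; apply/exists_inP; exists b => //;
     apply/exists_inP; exists c.
apply/exists_inP; exists x => //; apply/exists_inP; exists x => //.
by apply/exists_inP; exists x; rewrite // addrr_F2 add0r.
Qed.

Lemma sidon_S3star_disjoint M : sidon M -> S3star M :&: M = set0.
Proof.
move=> sM; apply/setP=> x; rewrite in_setI in_set0.
apply/negbTE/andP=> -[/S3starP[a [b [c [aM bM cM /and3P[ab ac bc] xE]]]] xM].
have [xa|xa] := eqVneq x a; first by move/eqP: xE; rewrite xa eq_sym addr_eql_F2 (negbTE bc).
have [xb|xb] := eqVneq x b.
  by move/eqP: xE; rewrite xb (addrC a) eq_sym addr_eql_F2 (negbTE ac).
have [xc|xc] := eqVneq x c.
  by move/eqP: xE; rewrite xc addrC addrA eq_sym addr_eql_F2 (negbTE ab).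
by move/negP: (sM x a b c xM aM bM cM xa xb xc ab ac bc); rewrite addr_eq_F2 addrA xE.
Qed.

Lemma sidon_setU1 M x : sidon M -> x \notin S3star M -> sidon (x |: M).
Proof.
move=> sM xS.
have x_sidon a b c : a \in M -> b \in M -> c \in M ->
    a != b -> b != c -> c != a -> x + a != b + c.
  move=> aM bM cM ab bc ca; rewrite addr_eq_F2 addrA.
  by apply: contra xS => /eqP->; rewrite mem_S3star // eq_sym.
have inM m : m \in x |: M -> x != m -> m \in M.
  by rewrite in_setU1 => /predU1P[->|//]; rewrite eqxx.
move=> m1 m2 m3 m4 M1 M2 M3 M4 d12 d13 d14 d23 d24 d34.
have [e1|x1] := eqVneq x m1.
  by rewrite -e1 in d12 d13 d14 *; rewrite x_sidon ?inM // eq_sym.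
have [e2|x2] := eqVneq x m2.
  by rewrite -e2 in d12 d23 d24 *; rewrite addrC x_sidon ?inM // eq_sym.
have [e3|x3] := eqVneq x m3.
  by rewrite -e3 in d13 d23 d34 *; rewrite eq_sym x_sidon ?inM // 1?eq_sym.
have [e4|x4] := eqVneq x m4.
  by rewrite -e4 in d14 d24 d34 *; rewrite eq_sym addrC x_sidon ?inM // 1?eq_sym.
exact: sM (inM _ _ _) (inM _ _ _) (inM _ _ _) (inM _ _ _) _ _ _ _ _ _.
Qed.

Lemma maximal_sidon_S3 M : maximal_sidon M -> S3 M = setT.
Proof.
case=> sM maxM; apply/setP=> x; rewrite S3E in_setT in_setU.
apply/orP; have [xM|xM] := boolP (x \in M); [by right | left].
apply/negPn/negP=> xS.
have := maxM _ (sidon_setU1 sM xS) (subsetUr _ _).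
by move/setP/(_ x); rewrite in_setU1 eqxx (negbTE xM).
Qed.

Lemma S3_maximal_sidon M : sidon M -> S3 M = setT -> maximal_sidon M.
Proof.
move=> sM S3T; split=> // S sS sMS; apply/eqP; rewrite eqEsubset sMS andbT.
apply/subsetP=> x xS; apply/negPn/negP=> xM.
have : x \in S3 M by rewrite S3T in_setT.
rewrite S3E in_setU (negbTE xM) orbF => /(subsetP (S3star_subset sMS)) xSS.
by have := sidon_S3star_disjoint sS; move/setP/(_ x); rewrite in_setI in_set0 xSS xS.
Qed.

End SumsOfThree.

Theorem proposition1p5 (t : nat) (M : {set 'rV['F_2]_t}) :
  sidon M -> (3 <= #|M|)%N ->
  (maximal_sidon M <-> S3 M = [set: 'rV['F_2]_t]) /\
  (S3 M = [set: 'rV['F_2]_t] <->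
     (S3star M :|: M = [set: 'rV['F_2]_t] /\ S3star M :&: M = set0)).
Proof.
move=> sM _; split.
  by split; [apply: maximal_sidon_S3 | apply: S3_maximal_sidon].
rewrite S3E; split; last by case.
by split=> //; apply: sidon_S3star_disjoint.
Qed.
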